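(* Let $J\ge 1$ and $K_1,\dots,K_J\ge 1$. For $j=1,\dots,J$ let $\mathbf{z}_j$ be a continuous latent variable and $c_j\in\{1,\dots,K_j\}$ a discrete variable. Write $\vec{\mathbf{z}}=(\mathbf{z}_1,\dots,\mathbf{z}_J)$ and $\mathbf{c}=(c_1,\dots,c_J)\in\mathcal{C}:=\prod_{j=1}^J\{1,\dots,K_j\}$. Suppose the prior factorises as $p_\theta(\vec{\mathbf{z}},\mathbf{c})=\prod_{j=1}^J p_\theta(\mathbf{z}_j,c_j)$, with $p_\theta(\mathbf{z}_j,c_j)=p_\theta(\mathbf{z}_j\mid c_j)p_\theta(c_j)$, and let $p_\theta(\mathbf{c}\mid\vec{\mathbf{z}})$ and $p_\theta(c_j\mid\mathbf{z}_j)$ be the corresponding posteriors. Fix an input $\mathbf{x}$ and let $q_\phi(\vec{\mathbf{z}}\mid\mathbf{x})=\prod_{j=1}^J q_\phi(\mathbf{z}_j\mid\mathbf{x})$ be any factorised probability distribution over $\vec{\mathbf{z}}$. For each $j$ define $$Z_j(q_\phi(\mathbf{z}_j\mid\mathbf{x})):=\sum_{c_j=1}^{K_j}\exp\left(\mathbb{E}_{q_\phi(\mathbf{z}_j\mid\mathbf{x})}\log p_\theta(c_j\mid\mathbf{z}_j)\right),\qquad \pi_j(c_j\mid q_\phi(\mathbf{z}_j\mid\mathbf{x})):=\frac{\exp\left(\mathbb{E}_{q_\phi(\mathbf{z}_j\mid\mathbf{x})}\log p_\theta(c_j\mid\mathbf{z}_j)\right)}{Z_j(q_\phi(\mathbf{z}_j\mid\mathbf{x}))}$$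 for $c_j=1,\dots,K_j$. Then, over all probability distributions $q_\phi(\mathbf{c}\mid\mathbf{x})$ on $\mathcal{C}$, the quantity $\mathbb{E}_{q_\phi(\vec{\mathbf{z}}\mid\mathbf{x})}\mathrm{KL}\left[q_\phi(\mathbf{c}\mid\mathbf{x})\,\|\,p_\theta(\mathbf{c}\mid\vec{\mathbf{z}})\right]$ is minimised by $q_\phi(\mathbf{c}\mid\mathbf{x})=\prod_{j=1}^J\pi_j(c_j\mid q_\phi(\mathbf{z}_j\mid\mathbf{x}))$, and its minimum value is $-\sum_{j=1}^J\log Z_j(q_\phi(\mathbf{z}_j\mid\mathbf{x}))$.
   Context: $\mathrm{KL}[q\|p]=\sum_{\mathbf{c}} q(\mathbf{c})\log\frac{q(\mathbf{c})}{p(\mathbf{c})}$ is the Kullback–Leibler divergence between distributions on the finite set $\mathcal{C}$. The expectations $\mathbb{E}_{q_\phi(\mathbf{z}_j\mid\mathbf{x})}\log p_\theta(c_j\mid\mathbf{z}_j)$ are assumed to be well defined and finite for all $j$ and $c_j$. *)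

From HB Require Import structures.
From mathcomp Require Import all_boot all_order all_algebra.
From mathcomp Require Import all_classical all_reals all_analysis.
Set Implicit Arguments.
Unset Strict Implicit.
Unset Printing Implicit Defensive.
Import Order.TTheory GRing.Theory Num.Theory.
Import numFieldNormedType.Exports.

Local Open Scope classical_set_scope.
Local Open Scope ring_scope.

Definition is_distr (C : finType) (R : realType) (q : C -> R) : Prop :=
  (forall c, 0 <= q c) /\ \sum_(c : C) q c = 1.

(* KL[q || p] = sum_c q(c) log (q(c)/p(c))  (terms with q(c) = 0 vanish). *)
Definition KLdiv (C : finType) (R : realType) (q p : C -> R) : R :=
  \sum_(c : C) q c * ln (q c / p c).

(* Bayes posterior p(c | z) = p(z | c) p(c) / sum_c' p(z | c') p(c')
   for a single pair (z_j, c_j), with class-conditional density f and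
   prior weights w. *)
Definition cpost (K : nat) (R : realType) (T : Type)
  (f : T -> 'I_K -> R) (w : 'I_K -> R) (z : T) (c : 'I_K) : R :=
  f z c * w c / \sum_(c' < K) f z c' * w c'.

Notation cspace J K := {dffun forall j : 'I_J, 'I_(K j)}.

(* Joint Bayes posterior p(c | zvec) computed from the factorised prior
   p(zvec, c) = prod_j p(z_j | c_j) p(c_j); zvec is observed through its
   coordinate projections pr j. *)
Definition jpost (J : nat) (K : 'I_J -> nat) (R : realType) (Zv : Type)
  (Z : 'I_J -> Type) (pr : forall j, Zv -> Z j)
  (f : forall j, Z j -> 'I_(K j) -> R) (w : forall j, 'I_(K j) -> R)
  (zv : Zv) (c : cspace J K) : R :=
  (\prod_(j < J) (f j (pr j zv) (c j) * w j (c j))) /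
  \sum_(c' : cspace J K) \prod_(j < J) (f j (pr j zv) (c' j) * w j (c' j)).

Definition Elogpost (d : measure_display) (T : measurableType d) (R : realType)
  (q : {measure set T -> \bar R}) (K : nat) (f : T -> 'I_K -> R) (w : 'I_K -> R)
  (c : 'I_K) : R :=
  Rintegral q setT (fun z => ln (cpost f w z c)).

Definition Zpart (d : measure_display) (T : measurableType d) (R : realType)
  (q : {measure set T -> \bar R}) (K : nat) (f : T -> 'I_K -> R) (w : 'I_K -> R) : R :=
  \sum_(c < K) expR (Elogpost q f w c).

Definition pipost (d : measure_display) (T : measurableType d) (R : realType)
  (q : {measure set T -> \bar R}) (K : nat) (f : T -> 'I_K -> R) (w : 'I_K -> R)
  (c : 'I_K) : R :=
  expR (Elogpost q f w c) / Zpart q f w.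

(** Almost surely the joint posterior factorises, p(c | z) = prod_j p(c_j | z_j), so
    KL[q(c) || p(c | z)] = sum_c q(c) (ln q(c) - sum_j ln p(c_j | z_j)).  Integrating
    against the factorised q(z | x), whose marginals are the q(z_j | x), replaces
    ln p(c_j | z_j) by L_j(c_j) := E_q ln p(c_j | z_j), which turns the objective into
    the free energy F(q) = sum_c q(c) (ln q(c) - E(c)) of the separable energy
    E(c) = sum_j L_j(c_j).  By the Gibbs variational principle
    F(q) = KL[q || g] - ln sum_c exp E(c) with g proportional to exp E, so F is
    minimised exactly at g with value -ln sum_c exp E(c); separability gives
    g = prod_j pi_j and sum_c exp E(c) = prod_j Z_j. *)

From HB Require Import structures.
From mathcomp Require Import all_boot all_order all_algebra.
From mathcomp Require Import all_classical all_reals all_analysis.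
From mathcomp Require Import ring lra measurable_realfun.
Import Order.TTheory GRing.Theory Num.Theory.
Import numFieldNormedType.Exports.
Local Open Scope classical_set_scope.
Local Open Scope ring_scope.

Lemma ln_prod (R : realType) (I : Type) (r : seq I) (P : pred I) (x : I -> R) :
  (forall i, P i -> 0 < x i) ->
  ln (\prod_(i <- r | P i) x i) = \sum_(i <- r | P i) ln (x i).
Proof.
move=> x_gt0.
suff [] : 0 < \prod_(i <- r | P i) x i /\
          ln (\prod_(i <- r | P i) x i) = \sum_(i <- r | P i) ln (x i) by [].
elim/big_rec2: _ => [|i s y Pi [y_gt0 <-]]; first by rewrite ln1.
by split; [rewrite mulr_gt0 ?x_gt0 | rewrite lnM ?posrE ?x_gt0].
Qed.

Lemma ler_sub_mul_ln_div (R : realType) (a b : R) :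
  0 <= a -> 0 < b -> a - b <= a * ln (a / b).
Proof.
rewrite le_eqVlt => /predU1P[<- b_gt0|a_gt0 b_gt0].
  by rewrite mul0r sub0r oppr_le0 ltW.
have : ln (b / a) <= b / a - 1.
  have := @le_ln1Dx R (b / a - 1); rewrite [1 + _]addrCA subrr addr0.
  by apply; rewrite ltrBrDl subrr divr_gt0.
rewrite -[b / a]invf_div lnV ?posrE ?divr_gt0 // => /(ler_wpM2l (ltW a_gt0)).
by rewrite mulrBr mulr1 invf_div mulrCA divff ?gt_eqF // mulr1 mulrN; lra.
Qed.

Definition gibbs {R : realType} {C : finType} (E : C -> R) (c : C) : R :=
  expR (E c) / \sum_(c' : C) expR (E c').

Definition free_energy {R : realType} {C : finType} (E p : C -> R) : R :=
  \sum_(c : C) p c * (ln (p c) - E c).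

Section GibbsVariational.
Context {R : realType} {C : finType}.

Lemma KLdiv_ge0 {p q : C -> R} :
  is_distr p -> is_distr q -> (forall c, 0 < q c) -> 0 <= KLdiv p q.
Proof.
move=> [p_ge0 p1] [_ q1] q_gt0.
rewrite -(subrr (1 : R)) -[X in X - _]p1 -q1 -sumrB.
by apply: ler_sum => c _; exact: ler_sub_mul_ln_div.
Qed.

Lemma KLdivxx (p : C -> R) : KLdiv p p = 0.
Proof.
apply: big1 => c _; have [->|pc_neq0] := eqVneq (p c) 0; first by rewrite mul0r.
by rewrite divff // ln1 mulr0.
Qed.

Variables (E : C -> R) (c0 : C).

Lemma sum_expR_gt0 : 0 < \sum_(c : C) expR (E c).
Proof.
rewrite (bigD1 c0) //= ltr_pwDl ?expR_gt0 //.
by apply: sumr_ge0 => c _; exact: expR_ge0.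
Qed.

Lemma gibbs_gt0 c : 0 < gibbs E c.
Proof. by rewrite divr_gt0 ?expR_gt0 ?sum_expR_gt0. Qed.

Lemma is_distr_gibbs : is_distr (gibbs E).
Proof.
split=> [c|]; first exact/ltW/gibbs_gt0.
by rewrite -mulr_suml divff // gt_eqF // sum_expR_gt0.
Qed.

Lemma ln_gibbs c : ln (gibbs E c) = E c - ln (\sum_(c' : C) expR (E c')).
Proof. by rewrite ln_div ?posrE ?expR_gt0 ?sum_expR_gt0 // expRK. Qed.

Lemma free_energy_KLdiv_gibbs {p} : is_distr p ->
  free_energy E p = KLdiv p (gibbs E) - ln (\sum_(c : C) expR (E c)).
Proof.
move=> [p_ge0 p1]; set lnZ := ln _.
rewrite -[lnZ]mul1r -p1 mulr_suml -sumrB; apply: eq_bigr => c _.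
have [->|pc_neq0] := eqVneq (p c) 0; first by rewrite !mul0r subr0.
have pc_gt0 : 0 < p c by rewrite lt_def pc_neq0 p_ge0.
by rewrite ln_div ?posrE ?gibbs_gt0 // ln_gibbs -/lnZ; ring.
Qed.

Lemma gibbs_variational :
  [/\ is_distr (gibbs E),
      forall p, is_distr p -> free_energy E (gibbs E) <= free_energy E p
    & free_energy E (gibbs E) = - ln (\sum_(c : C) expR (E c))].
Proof.
have := free_energy_KLdiv_gibbs is_distr_gibbs; rewrite KLdivxx sub0r => ->.
split=> // [|p p_distr]; first exact: is_distr_gibbs.
rewrite free_energy_KLdiv_gibbs // -[X in X <= _]sub0r lerD2r.
exact: KLdiv_ge0 p_distr is_distr_gibbs gibbs_gt0.
Qed.

End GibbsVariational.

Lemma bigA_distr_dffun {R : comNzRingType} {I : finType} {T_ : I -> finType}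
    (F : forall i, T_ i -> R) :
  \prod_i \sum_(t : T_ i) F i t = \sum_(c : {dffun forall i, T_ i}) \prod_i F i (c i).
Proof.
under eq_bigr => i _ do rewrite (big_tag F i).
rewrite bigA_distr_big_dep.
pose P_ i := [ffun t : T_ i => F i t].
transitivity (\sum_(t : fprod T_) \prod_(i in I) P_ i (t i)).
  rewrite big_fprod; apply: eq_bigr => g _; apply: eq_bigr => i _.
  by congr (untag _ _ _); apply: funext => t; rewrite /P_ ffunE.
rewrite (reindex (@dffun_of_fprod I T_)); last exact/onW_bij/dffun_of_fprod_bij.
by apply: eq_bigr => t _; apply: eq_bigr => i _; rewrite /P_ !ffunE.
Qed.

Section SeparableEnergy.
Variables (R : realType) (J : nat) (K : 'I_J -> nat) (L : forall j, 'I_(K j) -> R).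

Lemma sum_expR_dffun :
  \sum_(c : cspace J K) expR (\sum_(j < J) L j (c j)) =
  \prod_(j < J) \sum_(t : 'I_(K j)) expR (L j t).
Proof.
rewrite bigA_distr_dffun; apply: eq_bigr => c _; exact: expR_sum.
Qed.

Lemma gibbs_dffun (c : cspace J K) :
  gibbs (fun c : cspace J K => \sum_(j < J) L j (c j)) c =
  \prod_(j < J) gibbs (L j) (c j).
Proof. by rewrite /gibbs sum_expR_dffun expR_sum prodf_div. Qed.

End SeparableEnergy.

Lemma jpost_prod_cpost (R : realType) (J : nat) (K : 'I_J -> nat) (Zv : Type)
    (Z : 'I_J -> Type) (pr : forall j, Zv -> Z j)
    (f : forall j, Z j -> 'I_(K j) -> R) (w : forall j, 'I_(K j) -> R)
    (zv : Zv) (c : cspace J K) :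
  jpost pr f w zv c = \prod_(j < J) cpost (f j) (w j) (pr j zv) (c j).
Proof.
rewrite /jpost /cpost -(bigA_distr_dffun (fun j t => f j (pr j zv) t * w j t)).
by rewrite prodf_div.
Qed.

Lemma measurable_funV_ge0 d (T : measurableType d) (R : realType) (h : T -> R) :
  (forall x, 0 <= h x) -> measurable_fun setT h ->
  measurable_fun setT (fun x => (h x)^-1).
Proof.
move=> h_ge0 mh; rewrite (_ : (fun x => _) = (fun x => h x `^ (-1))).
  exact: measurableT_comp (measurable_powR _) mh.
by apply: funext => x; rewrite powR_inv1.
Qed.

Section ImageMeasure.
Context {d1 d2 : measure_display} {X : measurableType d1} {Y : measurableType d2}
  {R : realType} {phi : X -> Y} {Q : {measure set X -> \bar R}} {q : {measure set Y -> \bar R}}.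
Hypotheses (mphi : measurable_fun setT phi)
  (Qphi : forall A, measurable A -> Q (phi @^-1` A) = q A).

Let integral_image_pushforward (F : Y -> \bar R) :
  (\int[q]_y F y = \int[pushforward Q phi]_y F y)%E.
Proof. by apply: eq_measure_integral => A mA _; rewrite -Qphi. Qed.

Lemma integrable_comp_image (F : Y -> \bar R) :
  q.-integrable setT F -> Q.-integrable setT (F \o phi).
Proof.
move=> /integrableP[mF]; rewrite integral_image_pushforward.
rewrite ge0_integral_pushforward //; last exact: measurableT_comp.
by rewrite preimage_setT => iF; apply/integrableP; split => //; exact: measurableT_comp.
Qed.

Lemma integral_comp_image (F : Y -> \bar R) : q.-integrable setT F ->
  (\int[Q]_x F (phi x) = \int[q]_y F y)%E.
Proof.
move=> iF; rewrite integral_image_pushforward integral_pushforward ?preimage_setT //.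
- exact: measurable_int iF.
- exact: integrable_comp_image.
Qed.

End ImageMeasure.

Lemma factorised_marginal (R : realType) (J : nat) (dZ : 'I_J -> measure_display)
    (Z : forall j, measurableType (dZ j)) (dv : measure_display) (Zv : measurableType dv)
    (pr : forall j, Zv -> Z j) (Q : probability Zv R) (q : forall j, probability (Z j) R) :
  (forall A : forall j, set (Z j), (forall j, measurable (A j)) ->
     Q (\bigcap_(j in setT) (pr j @^-1` A j)) = (\prod_(j < J) q j (A j))%E) ->
  forall j (A : set (Z j)), measurable A -> Q (pr j @^-1` A) = q j A.
Proof.
move=> Q_factor j A mA.
(* the cylinder over [A]; the cast along [i = j] makes it well typed *)
pose B i := [set z : Z i | forall e : i = j, A (eq_rect i Z z j e)].
have BE : B j = A.
  apply/seteqP; split => z /=; first by move/(_ erefl).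
  by move=> Az e; rewrite (eq_axiomK e).
have BT i : i != j -> B i = setT.
  by move=> /eqP ij; apply/seteqP; split => // z _ e.
have mB i : measurable (B i) by case: (eqVneq i j) => [->|/BT ->]; rewrite ?BE.
have -> : pr j @^-1` A = \bigcap_(i in setT) (pr i @^-1` B i).
  apply/seteqP; split => x /=; last by move/(_ j I); rewrite BE.
  by move=> Ax i _ e; subst j.
rewrite Q_factor // (bigD1 j) //= BE big1 ?mule1 // => i ij.
by rewrite BT // probability_setT.
Qed.

Section ExpectedFreeEnergy.
Context d (T : measurableType d) (R : realType) (P : probability T R) (C : finType).
Variables (E : T -> C -> R) (L : C -> R) (p : C -> R).
Hypotheses (E_int : forall c, P.-integrable setT (fun x => (E x c)%:E))
  (E_mean : forall c, (\int[P]_x (E x c)%:E = (L c)%:E)%E).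

Let free_energy_EFin (E' : C -> R) : (free_energy E' p)%:E =
  ((\sum_c p c * ln (p c))%:E + \sum_c (- p c)%:E * (E' c)%:E)%E.
Proof.
rewrite (_ : (\sum_c _)%E = (\sum_c - p c * E' c)%:E); last first.
  by rewrite -sumEFin; apply: eq_bigr => c _; rewrite EFinM.
rewrite -EFinD /free_energy -big_split /=.
by congr _%:E; apply: eq_bigr => c _; ring.
Qed.

Let integrable_linear_part :
  P.-integrable setT (fun x => \sum_c (- p c)%:E * (E x c)%:E)%E.
Proof.
by apply: integrable_sum => // c _; exact: integrableZl.
Qed.

Lemma integrable_free_energy : P.-integrable setT (fun x => (free_energy (E x) p)%:E).
Proof.
under eq_fun do rewrite free_energy_EFin.
apply: integrableD => //; exact: finite_measure_integrable_cst.
Qed.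

Lemma integral_free_energy :
  (\int[P]_x (free_energy (E x) p)%:E = (free_energy L p)%:E)%E.
Proof.
under eq_integral do rewrite free_energy_EFin.
rewrite integralD //; last exact: finite_measure_integrable_cst.
rewrite integral_cst // [X in (_ * X + _)%E](_ : _ = 1%E) ?mule1; last first.
  exact: probability_setT.
rewrite integral_sum //; last by move=> c; exact: integrableZl.
under [X in (_ + X)%E]eq_bigr do rewrite integralZl // E_mean.
by rewrite free_energy_EFin.
Qed.

End ExpectedFreeEnergy.

Section FactorisedModel.
Context (R : realType) (J : nat) (K : 'I_J -> nat)
  (dZ : 'I_J -> measure_display) (Z : forall j, measurableType (dZ j))
  (dv : measure_display) (Zv : measurableType dv) (pr : forall j, Zv -> Z j)
  (f : forall j, Z j -> 'I_(K j) -> R) (w : forall j, 'I_(K j) -> R)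
  (Q : probability Zv R) (q : forall j, probability (Z j) R).
Hypotheses (pr_meas : forall j, measurable_fun setT (pr j))
  (f_ge0 : forall j z c, 0 <= f j z c)
  (f_meas : forall j c, measurable_fun setT (fun z => f j z c))
  (w_distr : forall j, is_distr (w j))
  (Q_factor : forall A : forall j, set (Z j), (forall j, measurable (A j)) ->
     Q (\bigcap_(j in setT) (pr j @^-1` A j)) = (\prod_(j < J) q j (A j))%E)
  (cpost_gt0 : forall j c, {ae q j, forall z, 0 < cpost (f j) (w j) z c})
  (ln_cpost_int : forall j c,
     (q j).-integrable setT (fun z => (ln (cpost (f j) (w j) z c))%:E)).

Definition log_jpost (zv : Zv) (c : cspace J K) : R :=
  \sum_(j < J) ln (cpost (f j) (w j) (pr j zv) (c j)).

Let Q_marginal j : forall A, measurable A -> Q (pr j @^-1` A) = q j A.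
Proof. exact: factorised_marginal Q_factor j. Qed.

Let integrable_ln_cpost_pr j c :
  Q.-integrable setT (fun zv => (ln (cpost (f j) (w j) (pr j zv) c))%:E).
Proof. exact: integrable_comp_image (pr_meas j) (Q_marginal j) _ (ln_cpost_int j c). Qed.

Lemma integrable_log_jpost c : Q.-integrable setT (fun zv => (log_jpost zv c)%:E).
Proof.
under eq_fun do rewrite /log_jpost -sumEFin.
by apply: integrable_sum => // j _; exact: integrable_ln_cpost_pr.
Qed.

Lemma integral_log_jpost c : (\int[Q]_zv (log_jpost zv c)%:E =
  (\sum_(j < J) Elogpost (q j) (f j) (w j) (c j))%:E)%E.
Proof.
under eq_integral do rewrite /log_jpost -sumEFin.
rewrite integral_sum //.
rewrite -sumEFin; apply: eq_bigr => j _.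
rewrite (integral_comp_image (pr_meas j) (Q_marginal j) _ (ln_cpost_int j (c j))).
by rewrite fineK //; exact: integrable_fin_num (ln_cpost_int j (c j)).
Qed.

Lemma ae_cpost_pr_gt0 :
  \forall zv \ae Q, forall j c, 0 < cpost (f j) (w j) (pr j zv) c.
Proof.
apply: filter_forall => j; apply: filter_forall => c.
have [N [mN qN0 sN]] := cpost_gt0 j c.
exists (pr j @^-1` N); split => //; last by move=> zv /= ?; exact: sN.
- by rewrite -[_ @^-1` _]setTI; exact: pr_meas.
- by rewrite Q_marginal.
Qed.

Lemma measurable_KLdiv_jpost (qc : cspace J K -> R) :
  measurable_fun setT (fun zv => KLdiv qc (jpost pr f w zv)).
Proof.
have w_ge0 j t : 0 <= w j t by case: (w_distr j).
have factor_ge0 zv (c : cspace J K) :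
    0 <= \prod_(j < J) (f j (pr j zv) (c j) * w j (c j)).
  by apply: prodr_ge0 => j _; exact: mulr_ge0.
have mfactor (c : cspace J K) :
    measurable_fun setT (fun zv => \prod_(j < J) (f j (pr j zv) (c j) * w j (c j))).
  apply: measurable_prod => j _; apply: measurable_funM; last exact: measurable_cst.
  exact: measurableT_comp (f_meas j (c j)) (pr_meas j).
have jpost_ge0 zv c : 0 <= jpost pr f w zv c by rewrite divr_ge0 ?sumr_ge0.
have mjpost c : measurable_fun setT (fun zv => jpost pr f w zv c).
  apply: measurable_funM => //; apply: measurable_funV_ge0 => [zv|].
    exact: sumr_ge0.
  exact: measurable_sum.
apply: measurable_sum => c; apply: measurable_funM => //.
apply: measurableT_comp; first exact: measurable_ln.
apply: measurable_funM => //.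
exact: measurable_funV_ge0.
Qed.

Lemma KLdiv_jpost_ae {qc : cspace J K -> R} : (forall c, 0 <= qc c) ->
  \forall zv \ae Q, KLdiv qc (jpost pr f w zv) = free_energy (log_jpost zv) qc.
Proof.
move=> qc_ge0; apply: filterS ae_cpost_pr_gt0 => zv cpost_pr_gt0.
apply: eq_bigr => c _; have [->|qc_neq0] := eqVneq (qc c) 0; first by rewrite !mul0r.
have qc_gt0 : 0 < qc c by rewrite lt_def qc_neq0 qc_ge0.
by rewrite jpost_prod_cpost ln_div ?posrE ?prodr_gt0 // ln_prod.
Qed.

Lemma expected_KLdiv_jpost (qc : cspace J K -> R) : is_distr qc ->
  (\int[Q]_zv (KLdiv qc (jpost pr f w zv))%:E =
   (free_energy (fun c : cspace J K => \sum_(j < J) Elogpost (q j) (f j) (w j) (c j))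
      qc)%:E)%E.
Proof.
move=> [qc_ge0 _].
rewrite (ae_eq_integral (fun zv => (free_energy (log_jpost zv) qc)%:E)) //.
- exact: integral_free_energy integrable_log_jpost integral_log_jpost.
- exact/measurable_EFinP/measurable_KLdiv_jpost.
- exact/measurable_int/integrable_free_energy/integrable_log_jpost.
- by apply: filterS (KLdiv_jpost_ae qc_ge0) => zv -> _.
Qed.

End FactorisedModel.

Theorem theorem2 (R : realType) (J : nat) (K : 'I_J -> nat)
  (dZ : 'I_J -> measure_display) (Z : forall j, measurableType (dZ j))
  (dv : measure_display) (Zv : measurableType dv)
  (pr : forall j, Zv -> Z j)
  (mu : forall j, {measure set Z j -> \bar R})
  (f : forall j, Z j -> 'I_(K j) -> R)
  (w : forall j, 'I_(K j) -> R)
  (Q : probability Zv R)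
  (q : forall j, probability (Z j) R) :
  (0 < J)%N ->
  (forall j, 0 < K j)%N ->
  (* zvec = (z_1, ..., z_J) : measurable coordinate projections *)
  (forall j, measurable_fun setT (pr j)) ->
  (* prior: p(z_j | c_j) is a probability density f j . c_j w.r.t. mu j *)
  (forall j z c, 0 <= f j z c) ->
  (forall j c, measurable_fun setT (fun z => f j z c)) ->
  (forall j c, (\int[mu j]_z (f j z c)%:E = 1)%E) ->
  (* prior: p(c_j) is a probability distribution w j *)
  (forall j, is_distr (w j)) ->
  (* q(zvec | x) = prod_j q(z_j | x) : factorised, with marginals q j *)
  (forall A : forall j, set (Z j), (forall j, measurable (A j)) ->
     Q (\bigcap_(j in setT) (pr j @^-1` A j)) = (\prod_(j < J) q j (A j))%E) ->
  (* E_{q(z_j|x)} log p(c_j | z_j) is well defined and finite *)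
  (forall j c, {ae q j, forall z, 0 < cpost (f j) (w j) z c}) ->
  (forall j c, (q j).-integrable setT
                 (fun z => (ln (cpost (f j) (w j) z c))%:E)) ->
  let qstar : cspace J K -> R :=
    fun c => \prod_(j < J) pipost (q j) (f j) (w j) (c j) in
  let EKL : (cspace J K -> R) -> \bar R :=
    fun qc => (\int[Q]_zv (KLdiv qc (jpost pr f w zv))%:E)%E in
  [/\ is_distr qstar,
      (forall qc : cspace J K -> R, is_distr qc -> (EKL qstar <= EKL qc)%E)
    & EKL qstar = (- \sum_(j < J) ln (Zpart (q j) (f j) (w j)))%:E].
Proof.
move=> _ K_gt0 pr_meas f_ge0 f_meas _ w_distr Q_factor cpost_gt0 ln_cpost_int qstar EKL.
pose L j := Elogpost (q j) (f j) (w j).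
pose E (c : cspace J K) := \sum_(j < J) L j (c j).
have EKLE qc : is_distr qc -> EKL qc = (free_energy E qc)%:E.
  exact: expected_KLdiv_jpost.
have qstarE : qstar = gibbs E by apply: funext => c; rewrite gibbs_dffun.
have [gibbs_distr gibbs_min gibbs_val] :=
  gibbs_variational E (finfun (fun j => Ordinal (K_gt0 j)) : cspace J K).
rewrite qstarE; split => // [qc qc_distr|].
  by rewrite !EKLE // lee_fin; exact: gibbs_min.
rewrite EKLE // gibbs_val sum_expR_dffun ln_prod // => j _.
exact: sum_expR_gt0 (Ordinal (K_gt0 j)).
Qed.
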